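(* Let $q_1,q_2$ be integers with $1\le q_1\le q_2$, $A=\begin{pmatrix}3q_1&0\\0&3q_2\end{pmatrix}$, $\mathcal{D}=\left\{\begin{pmatrix}0\\0\end{pmatrix},\begin{pmatrix}1\\0\end{pmatrix},\begin{pmatrix}0\\1\end{pmatrix}\right\}$. For $n\ge0$ let $\nu_n=\delta_{A^{-(n+1)}\mathcal{D}}*\delta_{A^{-(n+2)}\mathcal{D}}*\cdots$ (infinite convolution). Let $n\ge1$ and suppose $\Lambda$ is an orthogonal set of $\nu_n$. Then $\Lambda$ is an orthogonal set of $\nu_{n-1}$, but $\Lambda$ is not a maximal orthogonal set of $\nu_{n-1}$.
   Context: For a finite set $E\subseteq\mathbb{R}^2$, $\delta_E=\frac{1}{\#E}\sum_{e\in E}\delta_e$ is the uniform probability measure on $E$; the infinite convolution converges weakly to a Borel probability measure ($\nu_0$ is the self-affine measure $\mu_{A,\mathcal{D}}$). A countable $\Lambda\subseteq\mathbb{R}^2$ is an orthogonal set of $\mu$ if $\{e^{-2\pi i\langle\lambda,x\rangle}:\lambda\in\Lambda\}$ is orthogonal in $L^2(\mu)$; it is maximal if it is not properly contained in another orthogonal set of $\mu$. *)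

From HB Require Import structures.
From mathcomp Require Import all_boot all_order all_algebra.
From mathcomp Require Import all_classical all_reals all_analysis.
Set Implicit Arguments. Unset Strict Implicit. Unset Printing Implicit Defensive.
Import Order.TTheory GRing.Theory Num.Theory.
Import numFieldNormedType.Exports.
Local Open Scope classical_set_scope.
Local Open Scope ring_scope.

(* Points of R^2 are modelled as pairs (R * R), with the product (= Borel)
   sigma-algebra and the product topology. *)

Section Defs.
Variable R : realType.

Definition digit_x (i : 'I_3) : R := if val i == 1%N then 1 else 0.
Definition digit_y (i : 'I_3) : R := if val i == 2%N then 1 else 0.

Definition conv_point (q1 q2 n N : nat) (w : {ffun 'I_N -> 'I_3}) : R * R :=
  (\sum_(j < N) digit_x (w j) / (3 * q1)%:R ^+ (n + j + 1),
   \sum_(j < N) digit_y (w j) / (3 * q2)%:R ^+ (n + j + 1)).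

(* Integral of f against the finite convolution
   delta_{A^{-(n+1)}D} * ... * delta_{A^{-(n+N)}D}. *)
Definition finite_conv_int (q1 q2 n N : nat) (f : R * R -> R) : R :=
  (3%:R ^+ N)^-1 * \sum_(w : {ffun 'I_N -> 'I_3}) f (conv_point q1 q2 n w).

(* mu is nu_n = delta_{A^{-(n+1)}D} * delta_{A^{-(n+2)}D} * ...,
   i.e. the weak limit of the finite convolutions. *)
Definition is_nu (q1 q2 n : nat) (mu : probability (R * R)%type R) : Prop :=
  forall f : R * R -> R, continuous f -> (exists M : R, forall x, `|f x| <= M) ->
    (fun N => finite_conv_int q1 q2 n N f) @ \oo --> Rintegral mu setT f.

Definition dot2 (l x : R * R) : R := l.1 * x.1 + l.2 * x.2.

(* <e_l, e_l'>_{L^2(mu)} = \int exp(-2 pi i <l - l', x>) dmu; it vanishes iff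
   its real part (cos integral) and imaginary part (sin integral) vanish. *)
Definition orthogonal_set (mu : probability (R * R)%type R) (L : set (R * R)) : Prop :=
  countable L /\
  forall l l', L l -> L l' -> l <> l' ->
    Rintegral mu setT (fun x => cos (2 * pi * dot2 (l.1 - l'.1, l.2 - l'.2) x)) = 0 /\
    Rintegral mu setT (fun x => sin (2 * pi * dot2 (l.1 - l'.1, l.2 - l'.2) x)) = 0.

Definition maximal_orthogonal_set (mu : probability (R * R)%type R) (L : set (R * R)) : Prop :=
  orthogonal_set mu L /\
  forall L', orthogonal_set mu L' -> L `<=` L' -> L' = L.

End Defs.

From HB Require Import structures.
From mathcomp Require Import all_boot all_order all_algebra.
From mathcomp Require Import all_classical all_reals all_analysis.
From mathcomp Require Import ring lra zify.
Set Implicit Arguments. Unset Strict Implicit. Unset Printing Implicit Defensive.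
Import Order.TTheory GRing.Theory Num.Theory.
Import numFieldNormedType.Exports.
Local Open Scope classical_set_scope.
Local Open Scope ring_scope.

(* Since nu_{n-1} = delta_{A^{-n} D} * nu_n, the Fourier transforms satisfy
   hat nu_{n-1}(z) = m_D(A^{-n} z) hat nu_n(z), where m_D is the mask of D; hence
   every zero of hat nu_n is a zero of hat nu_{n-1}.  Conversely
   |m_D(e)|^2 >= 1 - (2 pi)^2 |e|^2 / 3, so the infinite product
   hat nu_n(z) = prod_{j >= 0} m_D(A^{-(n+j+1)} z) vanishes only if one of its factors
   does, and the zeros of m_D lie in (1/3, -1/3) + Z^2 or (-1/3, 1/3) + Z^2.
   Hence the differences of an orthogonal set L of nu_n lie in A^n Z^2, and for
   l0 in L the point p = l0 + A^n (1/3, -1/3) is not in L while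
   m_D(A^{-n}(l - p)) = m_D(A^{-n}(p - l)) = 0 for every l in L: L u {p} is still
   orthogonal for nu_{n-1}. *)

Lemma cvg_succ (T : topologicalType) (u : nat -> T) (l : T) :
  u @ \oo --> l -> u N.+1 @[N --> \oo] --> l.
Proof. by move/(cvg_comp _ _ (cvg_addnr 1)); under eq_fun do rewrite /= addn1. Qed.

Lemma countableU (T : Type) (A B : set T) :
  countable A -> countable B -> countable (A `|` B).
Proof.
by move=> cA cB; rewrite -bigcup2E; apply: bigcup_countable => [|[|[|i]] _].
Qed.

Section FfunCons.
Variables (T : finType) (N : nat).

Definition ffun_cons (p : T * {ffun 'I_N -> T}) : {ffun 'I_N.+1 -> T} :=
  [ffun j => if unlift ord0 j is Some k then p.2 k else p.1].

Definition ffun_uncons (w : {ffun 'I_N.+1 -> T}) : T * {ffun 'I_N -> T} :=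
  (w ord0, [ffun k => w (lift ord0 k)]).

Lemma ffun_consK : cancel ffun_cons ffun_uncons.
Proof.
move=> [x w]; rewrite /ffun_uncons ffunE unlift_none; congr (_, _).
by apply/ffunP => k; rewrite !ffunE liftK.
Qed.

Lemma ffun_unconsK : cancel ffun_uncons ffun_cons.
Proof.
move=> w; apply/ffunP => j; rewrite ffunE.
by case: unliftP => [k ->|->]; rewrite ?ffunE.
Qed.

Lemma sum_ffunS (V : nmodType) (F : {ffun 'I_N.+1 -> T} -> V) :
  \sum_w F w = \sum_(x : T) \sum_(w : {ffun 'I_N -> T}) F (ffun_cons (x, w)).
Proof.
rewrite (reindex ffun_cons) /=; last first.
  by apply: onW_bij; exists ffun_uncons; [exact: ffun_consK | exact: ffun_unconsK].
by rewrite pair_bigA; apply: eq_bigr => -[].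
Qed.

End FfunCons.

Section FiniteConvolution.
Variables (R : realType) (q1 q2 : nat).

Definition digit_point n (i : 'I_3) : R * R :=
  (digit_x R i / (3 * q1)%:R ^+ n.+1, digit_y R i / (3 * q2)%:R ^+ n.+1).

Lemma conv_point_cons n N (i : 'I_3) (w : {ffun 'I_N -> 'I_3}) :
  conv_point R q1 q2 n (ffun_cons (i, w)) =
  ((digit_point n i).1 + (conv_point R q1 q2 n.+1 w).1,
   (digit_point n i).2 + (conv_point R q1 q2 n.+1 w).2).
Proof.
rewrite /conv_point !big_ord_recl /= !ffunE unlift_none addn0 addn1.
by congr (_ + _, _ + _); apply: eq_bigr => j _;
  rewrite ffunE liftK /bump /= add1n addSnnS.
Qed.

Lemma finite_conv_intS n N (f : R * R -> R) :
  finite_conv_int q1 q2 n N.+1 f =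
  3^-1 * \sum_(i < 3) finite_conv_int q1 q2 n.+1 N
           (fun x => f ((digit_point n i).1 + x.1, (digit_point n i).2 + x.2)).
Proof.
rewrite /finite_conv_int sum_ffunS mulr_sumr mulr_sumr; apply: eq_bigr => i _.
rewrite exprS invfM -mulrA; congr (_ * (_ * _)).
by apply: eq_bigr => w _; rewrite conv_point_cons.
Qed.

Lemma finite_conv_int0 n (f : R * R -> R) : finite_conv_int q1 q2 n 0 f = f (0, 0).
Proof.
rewrite /finite_conv_int expr0 invr1 mul1r.
rewrite (eq_bigr (fun _ => f (0, 0))) => [|w _]; last by rewrite /conv_point !big_ord0.
by rewrite sumr_const card_ffun !card_ord expn0.
Qed.

Lemma finite_conv_intD n N (a b : R) (f g : R * R -> R) :
  finite_conv_int q1 q2 n N (fun x => a * f x + b * g x) =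
  a * finite_conv_int q1 q2 n N f + b * finite_conv_int q1 q2 n N g.
Proof. by rewrite /finite_conv_int big_split /= -!mulr_sumr; ring. Qed.

Lemma eq_finite_conv_int n N (f g : R * R -> R) : f =1 g ->
  finite_conv_int q1 q2 n N f = finite_conv_int q1 q2 n N g.
Proof. by move=> fg; rewrite /finite_conv_int; congr (_ * _); apply: eq_bigr. Qed.

End FiniteConvolution.

Section ComplexPairs.
Variable R : realType.

(* Pairs [(re, im)] stand for complex numbers. *)
Definition cmul (u v : R * R) : R * R :=
  (u.1 * v.1 - u.2 * v.2, u.1 * v.2 + u.2 * v.1).

Definition nsq (u : R * R) : R := u.1 ^+ 2 + u.2 ^+ 2.

Lemma nsq_cmul u v : nsq (cmul u v) = nsq u * nsq v.
Proof. by rewrite /nsq /=; ring. Qed.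

Lemma cmul0l v : cmul (0, 0) v = (0, 0).
Proof. by rewrite /cmul /= !mul0r subr0 addr0. Qed.

Lemma nsq0 : nsq (0, 0) = 0.
Proof. by rewrite /nsq /= expr2 mul0r addr0. Qed.

Lemma nsq_ge0 u : 0 <= nsq u.
Proof. by rewrite /nsq addr_ge0 ?sqr_ge0. Qed.

Lemma nsq_eq0 u : (nsq u == 0) = (u == (0, 0)).
Proof. by case: u => a b; rewrite /nsq paddr_eq0 ?sqr_ge0 // !sqrf_eq0 xpair_eqE. Qed.

Lemma nsq_gt0 u : u != (0, 0) -> 0 < nsq u.
Proof. by move=> u0; rewrite lt_def nsq_eq0 u0 nsq_ge0. Qed.

Lemma continuous_cmul c : continuous (cmul c).
Proof.
move=> u.
have re : (fun v : R * R => c.1 * v.1 - c.2 * v.2) @ u --> c.1 * u.1 - c.2 * u.2.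
  by apply: cvgB; apply: cvgM; (exact: cvg_cst || exact: cvg_fst || exact: cvg_snd).
have im : (fun v : R * R => c.1 * v.2 + c.2 * v.1) @ u --> c.1 * u.2 + c.2 * u.1.
  by apply: cvgD; apply: cvgM; (exact: cvg_cst || exact: cvg_fst || exact: cvg_snd).
exact: cvg_pair re im.
Qed.

Lemma continuous_nsq : continuous nsq.
Proof. by move=> u; apply: cvgD; apply: cvgM; (exact: cvg_fst || exact: cvg_snd). Qed.

End ComplexPairs.

Section FourierTransform.
Variables (R : realType) (q1 q2 : nat).

Definition mask_D (e : R * R) : R * R :=
  ((1 + cos (2 * pi * e.1) + cos (2 * pi * e.2)) / 3,
   (sin (2 * pi * e.1) + sin (2 * pi * e.2)) / 3).

(* [Ainv n z] is A^{-(n+1)} z, matching the exponent in [conv_point]. *)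
Definition Ainv n (z : R * R) : R * R :=
  (z.1 / (3 * q1)%:R ^+ n.+1, z.2 / (3 * q2)%:R ^+ n.+1).

Definition fourier_fin n N (z : R * R) : R * R :=
  (finite_conv_int q1 q2 n N (fun x => cos (2 * pi * dot2 z x)),
   finite_conv_int q1 q2 n N (fun x => sin (2 * pi * dot2 z x))).

Definition fourier (mu : probability (R * R)%type R) (z : R * R) : R * R :=
  (Rintegral mu setT (fun x => cos (2 * pi * dot2 z x)),
   Rintegral mu setT (fun x => sin (2 * pi * dot2 z x))).

Lemma orthogonal_setE mu L : orthogonal_set mu L <->
  countable L /\ forall l l', L l -> L l' -> l <> l' ->
    fourier mu (l.1 - l'.1, l.2 - l'.2) = (0, 0).
Proof.
rewrite /orthogonal_set /fourier.
by split=> -[cL oL]; split=> // l l' Ll Ll' ll'; case: (oL l l' Ll Ll' ll') => -> ->.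
Qed.

Lemma dot2D (z x y : R * R) : dot2 z (x.1 + y.1, x.2 + y.2) = dot2 z x + dot2 z y.
Proof. by rewrite /dot2 /=; ring. Qed.

Lemma mask_AinvE n z : mask_D (Ainv n z) =
  (3^-1 * \sum_(i < 3) cos (2 * pi * dot2 z (digit_point R q1 q2 n i)),
   3^-1 * \sum_(i < 3) sin (2 * pi * dot2 z (digit_point R q1 q2 n i))).
Proof.
rewrite /mask_D /Ainv /digit_point /dot2 /digit_x /digit_y !big_ord_recl !big_ord0 /=.
rewrite !(mul0r, mulr0, addr0, add0r, mul1r, cos0, sin0).
by rewrite !(mulrC 3^-1) addrA.
Qed.

Lemma fourier_fin0 n z : fourier_fin n 0 z = (1, 0).
Proof. by rewrite /fourier_fin !finite_conv_int0 /dot2 /= !(mulr0, addr0) cos0 sin0. Qed.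

Lemma fourier_finS n N z :
  fourier_fin n N.+1 z = cmul (mask_D (Ainv n z)) (fourier_fin n.+1 N z).
Proof.
rewrite /fourier_fin mask_AinvE /cmul /= !finite_conv_intS.
set c := fun i => cos (2 * pi * dot2 z (digit_point R q1 q2 n i)).
set s := fun i => sin (2 * pi * dot2 z (digit_point R q1 q2 n i)).
pose g f i := finite_conv_int q1 q2 n.+1 N (fun x => f (2 * pi * dot2 z
    ((digit_point R q1 q2 n i).1 + x.1, (digit_point R q1 q2 n i).2 + x.2))).
have cosE i : g cos i = c i * finite_conv_int q1 q2 n.+1 N (fun x => cos (2 * pi * dot2 z x))
    + (- s i) * finite_conv_int q1 q2 n.+1 N (fun x => sin (2 * pi * dot2 z x)).
  by rewrite -finite_conv_intD; apply: eq_finite_conv_int => x; rewrite dot2D mulrDr cosD mulNr.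
have sinE i : g sin i = s i * finite_conv_int q1 q2 n.+1 N (fun x => cos (2 * pi * dot2 z x))
    + c i * finite_conv_int q1 q2 n.+1 N (fun x => sin (2 * pi * dot2 z x)).
  by rewrite -finite_conv_intD; apply: eq_finite_conv_int => x; rewrite dot2D mulrDr sinD.
rewrite (eq_bigr _ (fun i _ => cosE i)) (eq_bigr _ (fun i _ => sinE i)).
by rewrite !big_ord_recl !big_ord0 /c /s; congr (_, _); ring.
Qed.

Lemma nsq_fourier_fin n N z :
  nsq (fourier_fin n N z) = \prod_(j < N) nsq (mask_D (Ainv (n + j) z)).
Proof.
elim: N n => [|N IH] n; first by rewrite fourier_fin0 big_ord0 /nsq /= expr1n expr0n addr0.
rewrite fourier_finS nsq_cmul IH big_ord_recl addn0; congr (_ * _).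
by apply: eq_bigr => j _; rewrite lift0 addSnnS.
Qed.

Lemma continuous_phase (g : R -> R) z : continuous g ->
  continuous (fun x : R * R => g (2 * pi * dot2 z x)).
Proof.
move=> cg x; apply: continuous_comp; last exact: cg.
by apply: cvgM; [exact: cvg_cst | apply: cvgD; apply: cvgM;
  (exact: cvg_cst || exact: cvg_fst || exact: cvg_snd)].
Qed.

Lemma fourier_fin_cvg n mu z : is_nu q1 q2 n mu ->
  fourier_fin n N z @[N --> \oo] --> fourier mu z.
Proof.
move=> nu_mu; apply: (cvg_pair (nu_mu _ _ _) (nu_mu _ _ _)).
- by apply: continuous_phase; exact: continuous_cos.
- by exists 1 => x; apply: cos_max.
- by apply: continuous_phase; exact: continuous_sin.
- by exists 1 => x; apply: sin_max.
Qed.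

Lemma fourier_conv m mu mu' z : is_nu q1 q2 m mu -> is_nu q1 q2 m.+1 mu' ->
  fourier mu z = cmul (mask_D (Ainv m z)) (fourier mu' z).
Proof.
move=> nu_mu nu_mu'.
have lim1 := cvg_succ (fourier_fin_cvg (z := z) nu_mu).
have lim2 : fourier_fin m N.+1 z @[N --> \oo] --> cmul (mask_D (Ainv m z)) (fourier mu' z).
  under eq_fun do rewrite fourier_finS.
  exact: continuous_cvg _ (@continuous_cmul R _ (fourier mu' z)) (fourier_fin_cvg (z := z) nu_mu').
exact: cvg_unique _ lim1 lim2.
Qed.

End FourierTransform.

Section Trigonometry.
Variable R : realType.

Lemma abs_sin_le (x : R) : `|sin x| <= `|x|.
Proof.
have pos (y : R) : 0 < y -> `|sin y| <= y.
  move=> y0; have [c _] := MVT y0 (fun t _ => is_derive_sin t)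
    (continuous_subspaceT (@continuous_sin R)).
  rewrite sin0 !subr0 => ->.
  by rewrite normrM (gtr0_norm y0) ler_piMl ?cos_max ?ltW.
have [x0|x0|->] := ltrgtP x 0; last by rewrite sin0 normr0.
- by rewrite -normrN -sinN (ltr0_norm x0); apply: pos; rewrite oppr_gt0.
- by rewrite (gtr0_norm x0); apply: pos.
Qed.

Lemma cos_ge_1_sub_sqr_half (x : R) : 1 - x ^+ 2 / 2 <= cos x.
Proof.
have -> : x = (x / 2) *+ 2 by rewrite -mulr_natr mulfVK.
move: (x / 2) => y.
have : sin y ^+ 2 <= y ^+ 2.
  by rewrite -real_normK ?num_real // -[y ^+ 2]real_normK ?num_real // lerXn2r ?nnegrE ?abs_sin_le.
rewrite cos_mulr2n cos2sin2 !mulr2n.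
have -> : (y + y) ^+ 2 / 2 = y ^+ 2 + y ^+ 2 by field.
lra.
Qed.

Lemma cos3 (x : R) : cos (3 * x) = 4 * cos x ^+ 3 - 3 * cos x.
Proof.
have -> : 3 * x = x + x + x by ring.
rewrite !cosD !sinD.
have -> : (cos x * cos x - sin x * sin x) * cos x - (sin x * cos x + cos x * sin x) * sin x
  = cos x ^+ 3 - 3 * cos x * sin x ^+ 2 by ring.
by rewrite sin2cos2; ring.
Qed.

Lemma cos_2pi_third : cos (2 * pi * 3^-1) = - 2^-1 :> R.
Proof.
have pi_gt0 := @pi_gt0 R.
have c_gt0 : 0 < cos (pi / 3 : R) by apply: cos_gt0_pihalf; apply/andP; split; lra.
have : cos (3 * (pi / 3) : R) = -1 by rewrite mulrC mulfVK // cospi.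
rewrite cos3; set c := cos (pi / 3) in c_gt0 *.
(* cos (pi / 3) is the positive root of 4 c^3 - 3 c + 1 = (c + 1) (2 c - 1)^2. *)
move=> c3; have : (c + 1) * (2 * c - 1) ^+ 2 = (4 * c ^+ 3 - 3 * c) + 1 by ring.
rewrite c3 addNr => /eqP; rewrite mulf_eq0 sqrf_eq0 => /orP[/eqP|/eqP c2]; first lra.
have -> : 2 * pi * 3^-1 = (pi / 3) *+ 2 :> R by rewrite mulr2n; field.
rewrite cos_mulr2n -/c; have -> : c = 2^-1 by lra.
by field.
Qed.

End Trigonometry.

Section Phases.
Variable R : realType.

(* [trivial_phase x] encodes [x \in Z] as [e^{2 pi i x} = 1]. *)
Definition trivial_phase (x : R) := cos (2 * pi * x) = 1.

Lemma sin_trivial_phase x : trivial_phase x -> sin (2 * pi * x) = 0.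
Proof. by move=> hx; apply: cos1sin0; rewrite hx normr1. Qed.

Lemma cos_trivial_phaseD x y : trivial_phase y -> cos (2 * pi * (x + y)) = cos (2 * pi * x).
Proof. by move=> hy; rewrite mulrDr cosD hy (sin_trivial_phase hy) mulr1 mulr0 subr0. Qed.

Lemma sin_trivial_phaseD x y : trivial_phase y -> sin (2 * pi * (x + y)) = sin (2 * pi * x).
Proof. by move=> hy; rewrite mulrDr sinD hy (sin_trivial_phase hy) mulr1 mulr0 addr0. Qed.

Lemma trivial_phase0 : trivial_phase 0.
Proof. by rewrite /trivial_phase mulr0 cos0. Qed.

Lemma trivial_phaseN x : trivial_phase x -> trivial_phase (- x).
Proof. by rewrite /trivial_phase mulrN cosN. Qed.

Lemma trivial_phaseD x y : trivial_phase x -> trivial_phase y -> trivial_phase (x + y).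
Proof. by move=> hx hy; rewrite /trivial_phase cos_trivial_phaseD. Qed.

Lemma trivial_phaseM_natr x M : trivial_phase x -> trivial_phase (x * M%:R).
Proof.
move=> hx; elim: M => [|M IH]; first by rewrite mulr0; exact: trivial_phase0.
by rewrite -natr1 mulrDr mulr1; exact: trivial_phaseD.
Qed.

Lemma trivial_phase_mul3 t : cos (2 * pi * t) = - 2^-1 -> trivial_phase (3 * t).
Proof. by move=> ct; rewrite /trivial_phase mulrCA cos3 ct; field. Qed.

Lemma not_trivial_phase_third : ~ trivial_phase (3^-1 : R).
Proof. by rewrite /trivial_phase cos_2pi_third => h; lra. Qed.

Lemma mask_eq0_cos (e : R * R) : mask_D e = (0, 0) ->
  cos (2 * pi * e.1) = - 2^-1 /\ cos (2 * pi * e.2) = - 2^-1.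
Proof.
rewrite /mask_D => -[re im].
have := cos2Dsin2 (2 * pi * e.1); have := cos2Dsin2 (2 * pi * e.2).
set a := 2 * pi * e.1 in re im *; set b := 2 * pi * e.2 in re im *.
have cb : cos b = - 1 - cos a by lra.
have sb : sin b = - sin a by lra.
rewrite cb sb sqrrN => ab a1.
have ca : cos a = - 2^-1 by nra.
by split; lra.
Qed.

Lemma mask_eq0_trivial_phase (e : R * R) : mask_D e = (0, 0) ->
  trivial_phase (3 * e.1) /\ trivial_phase (3 * e.2).
Proof. by case/mask_eq0_cos => /trivial_phase_mul3 ? /trivial_phase_mul3. Qed.

Lemma mask_shift_eq0 t u v : cos (2 * pi * t) = - 2^-1 ->
  trivial_phase u -> trivial_phase v -> mask_D (t + u, - t + v) = (0, 0).
Proof.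
move=> ct hu hv; rewrite /mask_D /= !cos_trivial_phaseD // !sin_trivial_phaseD //.
by rewrite mulrN cosN sinN ct; congr (_, _); field.
Qed.

End Phases.

Section InfiniteProducts.
Variable R : realType.

Lemma prod_1_sub_ge (e : nat -> R) N : (forall i, 0 <= e i <= 1) ->
  1 - \sum_(i < N) e i <= \prod_(i < N) (1 - e i).
Proof.
move=> e01; elim: N => [|N IH]; first by rewrite !big_ord0 subr0.
rewrite big_ord_recr big_ord_recr /=.
have /andP[e0 e1] := e01 N.
have P0 : 0 <= \prod_(i < N) (1 - e i).
  by apply: prodr_ge0 => i _; case/andP: (e01 i) => _; rewrite subr_ge0.
have S0 : 0 <= \sum_(i < N) e i by apply: sumr_ge0 => i _; case/andP: (e01 i).
set P := \prod_(i < N) _ in IH P0 *; set S := \sum_(i < N) _ in IH S0 *.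
nra.
Qed.

Lemma sum_halfpow_le N : \sum_(j < N) (2^-1 : R) ^+ j.+2 <= 2^-1.
Proof.
suff -> : \sum_(j < N) (2^-1 : R) ^+ j.+2 = 2^-1 - 2^-1 ^+ N.+1.
  by rewrite lerBlDr lerDl exprn_ge0.
elim: N => [|N IH]; first by rewrite big_ord0 expr1 subrr.
by rewrite big_ord_recr /= IH !exprS; field.
Qed.

Lemma prod_not_cvg0 (a : nat -> R) J : (forall j, 0 < a j) ->
  (forall j, 1 - 2^-1 ^+ j.+2 <= a (J + j)) ->
  ~ (\prod_(j < N) a j @[N --> \oo] --> 0).
Proof.
move=> a_gt0 a_tail.
have c_gt0 : 0 < \prod_(j < J) a j by apply: prodr_gt0 => j _.
have half_le N : 2^-1 <= \prod_(j < N) a (J + j).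
  have e01 j : 0 <= (2^-1 : R) ^+ j.+2 <= 1.
    by rewrite exprn_ge0 ?exprn_ile1 //; lra.
  apply: le_trans _ (le_trans (prod_1_sub_ge N e01) _).
    by have := sum_halfpow_le N; lra.
  by apply: ler_prod => j _; rewrite a_tail andbT subr_ge0; case/andP: (e01 j).
move/cvgr0_norm_lt/(_ _ (divr_gt0 c_gt0 (ltr0n R 2))) => -[M _ small].
have := small (J + M)%N (leq_addl _ _); rewrite big_split_ord /=.
rewrite ger0_norm ?mulr_ge0 ?prodr_ge0 // => [|j _|j _]; [|exact: ltW..].
have := half_le M; set P := \prod_(j < M) _; nra.
Qed.

End InfiniteProducts.

Section MaskBounds.
Variable R : realType.

Lemma nsq_mask_ge (e : R * R) : (2 * pi) ^+ 2 * nsq e / 3 <= 1 ->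
  1 - (2 * pi) ^+ 2 * nsq e / 3 <= nsq (mask_D e).
Proof.
have -> : (2 * pi) ^+ 2 * nsq e = (2 * pi * e.1) ^+ 2 + (2 * pi * e.2) ^+ 2.
  by rewrite /nsq; ring.
rewrite /nsq /mask_D /=.
have := cos_ge_1_sub_sqr_half (2 * pi * e.1); have := cos_ge_1_sub_sqr_half (2 * pi * e.2).
move: (2 * pi * e.1) (2 * pi * e.2) => a b cb ca small.
have := sqr_ge0 ((sin a + sin b) / 3); have := sqr_ge0 a; have := sqr_ge0 b.
have : 1 - (a ^+ 2 + b ^+ 2) / 6 <= (1 + cos a + cos b) / 3 by lra.
nra.
Qed.

Lemma pow2_le_scale (q p : nat) : (0 < q)%N -> (2 ^ p <= ((3 * q) ^ p.+1) ^ 2)%N.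
Proof.
move=> q_gt0; have s_gt0 : (0 < 3 * q)%N by rewrite muln_gt0.
apply: (@leq_trans ((3 * q) ^ p)).
  by case: p => [//|p]; rewrite leq_exp2r //; lia.
by rewrite -expnM; apply: leq_pexp2l => //; lia.
Qed.

End MaskBounds.

Section FourierZeros.
Variables (R : realType) (q1 q2 : nat).
Hypotheses (q1_gt0 : (0 < q1)%N) (q2_gt0 : (0 < q2)%N).

Lemma nsq_Ainv_le (p : nat) (z : R * R) : nsq (Ainv q1 q2 p z) <= nsq z / 2 ^+ p.
Proof.
have sqr_le q (a : R) : (0 < q)%N -> (a / (3 * q)%:R ^+ p.+1) ^+ 2 <= a ^+ 2 / 2 ^+ p.
  move=> q_gt0; rewrite expr_div_n ler_wpM2l ?sqr_ge0 // lef_pV2 ?posrE ?exprn_gt0 ?ltr0n ?muln_gt0 //.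
  by rewrite -!natrX ler_nat pow2_le_scale.
by rewrite /nsq mulrDl lerD ?sqr_le.
Qed.

Lemma mask_Ainv_tail k (z : R * R) :
  exists J, forall j, 1 - 2^-1 ^+ j.+2 <= nsq (mask_D (Ainv q1 q2 (k + (J + j)) z)).
Proof.
set K := (2 * pi) ^+ 2 * nsq z / 3.
have K_ge0 : 0 <= K by rewrite /K divr_ge0 // mulr_ge0 ?sqr_ge0 ?nsq_ge0.
have [J KJ] : exists J, 4 * K <= 2 ^+ J.
  have := archi_boundP (mulr_ge0 (ler0n R 4) K_ge0).
  set J := Num.Def.archi_bound _ => KJ; exists J; apply: le_trans (ltW KJ) _.
  by rewrite -natrX ler_nat ltnW // ltn_expl.
exists J => j; set e := Ainv q1 q2 (k + (J + j)) z.
have small : (2 * pi) ^+ 2 * nsq e / 3 <= 2^-1 ^+ j.+2.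
  apply: (@le_trans _ _ (K / 2 ^+ (k + (J + j)))).
    have c_ge0 : 0 <= (2 * pi) ^+ 2 / 3 :> R by rewrite divr_ge0 ?sqr_ge0.
    have := ler_wpM2l c_ge0 (nsq_Ainv_le (k + (J + j)) z).
    by rewrite /K -/e; lra.
  rewrite ler_pdivrMr ?exprn_gt0 //.
  have -> : (2^-1 : R) ^+ j.+2 * 2 ^+ (k + (J + j)) = 2 ^+ k * 2 ^+ J / 4.
    by rewrite !exprD exprVn !exprS; field; rewrite ?gt_eqF ?exprn_gt0.
  have : 1 <= 2 ^+ k :> R by rewrite exprn_ege1 ?ler1n.
  have : 0 <= 2 ^+ J :> R by rewrite exprn_ge0.
  nra.
have pow_le1 : (2^-1 : R) ^+ j.+2 <= 1 by rewrite exprn_ile1 //; lra.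
by apply: le_trans _ (nsq_mask_ge _); lra.
Qed.

Lemma fourier_eq0_mask_eq0 k mu (z : R * R) : is_nu q1 q2 k mu ->
  fourier mu z = (0, 0) -> exists j, mask_D (Ainv q1 q2 (k + j) z) = (0, 0).
Proof.
move=> nu_mu z0; apply: contrapT => no_zero.
have a_gt0 j : 0 < nsq (mask_D (Ainv q1 q2 (k + j) z)).
  by apply: nsq_gt0; apply/eqP => mask0; apply: no_zero; exists j.
have [J tail] := mask_Ainv_tail k z.
apply: (prod_not_cvg0 a_gt0 tail).
under eq_fun do rewrite -nsq_fourier_fin.
rewrite -(nsq0 R) -z0.
exact: continuous_cvg _ (@continuous_nsq R (fourier mu z)) (fourier_fin_cvg (z := z) nu_mu).
Qed.

Lemma Ainv_scale (q k j : nat) (a : R) : (0 < q)%N ->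
  3 * (a / (3 * q)%:R ^+ (k + j).+1) * (q * (3 * q) ^ j)%:R = a / (3 * q)%:R ^+ k.
Proof.
move=> q_gt0; have q_neq0 : q%:R != 0 :> R by rewrite pnatr_eq0 -lt0n.
rewrite !(natrM, natrX) exprS exprD; field.
by rewrite !expf_neq0 ?mulf_neq0 ?q_neq0.
Qed.

Lemma fourier_eq0_trivial_phase k mu (z : R * R) : is_nu q1 q2 k mu ->
  fourier mu z = (0, 0) ->
  trivial_phase (z.1 / (3 * q1)%:R ^+ k) /\ trivial_phase (z.2 / (3 * q2)%:R ^+ k).
Proof.
move=> nu_mu z0; have [j /mask_eq0_trivial_phase[ph1 ph2]] := fourier_eq0_mask_eq0 nu_mu z0.
rewrite -(Ainv_scale k j z.1 q1_gt0) -(Ainv_scale k j z.2 q2_gt0).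
by split; apply: trivial_phaseM_natr.
Qed.

End FourierZeros.

Lemma not_maximal_orthogonal (R : realType) (mu : probability (R * R)%type R) L p :
  orthogonal_set mu L -> ~ L p ->
  (forall l, L l -> fourier mu (l.1 - p.1, l.2 - p.2) = (0, 0) /\
                    fourier mu (p.1 - l.1, p.2 - l.2) = (0, 0)) ->
  ~ maximal_orthogonal_set mu L.
Proof.
move=> oL Lp pL [_ maxL].
have oLp : orthogonal_set mu (L `|` [set p]).
  move/orthogonal_setE: oL => [cL oL]; apply/orthogonal_setE.
  split; first exact: countableU (countable1 p).
  move=> l l' [Ll|->] [Ll'|->] ll' //.
  - exact: oL.
  - exact: (pL l Ll).1.
  - exact: (pL l' Ll').2.
by apply: Lp; rewrite -(maxL _ oLp (@subsetUl _ L [set p])); right.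
Qed.

Section ConsecutiveLevels.
Variables (R : realType) (q1 q2 m : nat) (mu mu' : probability (R * R)%type R).
Hypotheses (nu_mu : is_nu q1 q2 m mu) (nu_mu' : is_nu q1 q2 m.+1 mu').

Lemma fourier_eq0_of_mask_eq0 z : mask_D (Ainv q1 q2 m z) = (0, 0) -> fourier mu z = (0, 0).
Proof. by move=> mask0; rewrite (fourier_conv z nu_mu nu_mu') mask0 cmul0l. Qed.

Lemma orthogonal_set_of_succ L : orthogonal_set mu' L -> orthogonal_set mu L.
Proof.
move=> /orthogonal_setE[cL oL]; apply/orthogonal_setE; split=> // l l' Ll Ll' ll'.
by rewrite (fourier_conv _ nu_mu nu_mu') oL // /cmul /= !mulr0 subr0 addr0.
Qed.

Lemma exists_orthogonal_point L l0 : (0 < q1)%N -> (0 < q2)%N ->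
  orthogonal_set mu' L -> L l0 ->
  exists p, ~ L p /\ forall l, L l ->
    fourier mu (l.1 - p.1, l.2 - p.2) = (0, 0) /\ fourier mu (p.1 - l.1, p.2 - l.2) = (0, 0).
Proof.
move=> q1_gt0 q2_gt0 /orthogonal_setE[_ oL] Ll0.
set X1 : R := (3 * q1)%:R ^+ m.+1; set X2 : R := (3 * q2)%:R ^+ m.+1.
have X1_neq0 : X1 != 0 by rewrite expf_neq0 // pnatr_eq0 muln_eq0 negb_or /= -lt0n.
have X2_neq0 : X2 != 0 by rewrite expf_neq0 // pnatr_eq0 muln_eq0 negb_or /= -lt0n.
have phase l : L l -> trivial_phase ((l.1 - l0.1) / X1) /\ trivial_phase ((l.2 - l0.2) / X2).
  move=> Ll; have [->|ll0] := eqVneq l l0.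
    by rewrite !subrr !mul0r; split; exact: trivial_phase0.
  by case: (fourier_eq0_trivial_phase q1_gt0 q2_gt0 nu_mu' (oL _ _ Ll Ll0 (elimN eqP ll0))).
have cos_third : cos (2 * pi * - 3^-1) = - 2^-1 :> R by rewrite mulrN cosN cos_2pi_third.
exists (l0.1 + X1 / 3, l0.2 - X2 / 3); split.
  move=> /phase[+ _] /=; have -> : (l0.1 + X1 / 3 - l0.1) / X1 = 3^-1 by field.
  exact: not_trivial_phase_third.
move=> l /phase[ph1 ph2]; split; apply: fourier_eq0_of_mask_eq0; rewrite /Ainv /= -/X1 -/X2.
- have -> : ((l.1 - (l0.1 + X1 / 3)) / X1, (l.2 - (l0.2 - X2 / 3)) / X2) =
            (- 3^-1 + (l.1 - l0.1) / X1, - - 3^-1 + (l.2 - l0.2) / X2).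
    by congr (_, _); field.
  exact: mask_shift_eq0.
- have -> : ((l0.1 + X1 / 3 - l.1) / X1, (l0.2 - X2 / 3 - l.2) / X2) =
            (3^-1 + - ((l.1 - l0.1) / X1), - 3^-1 + - ((l.2 - l0.2) / X2)).
    by congr (_, _); field.
  by apply: mask_shift_eq0; rewrite ?cos_2pi_third //; exact: trivial_phaseN.
Qed.

End ConsecutiveLevels.

Theorem lemma2p7 (R : realType) (q1 q2 n : nat)
    (nu_n nu_nm1 : probability (R * R)%type R) :
  (1 <= q1)%N -> (q1 <= q2)%N -> (1 <= n)%N ->
  is_nu q1 q2 n nu_n -> is_nu q1 q2 n.-1 nu_nm1 ->
  forall L : set (R * R), orthogonal_set nu_n L ->
    orthogonal_set nu_nm1 L /\ ~ maximal_orthogonal_set nu_nm1 L.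
Proof.
move=> q1_gt0 q12 n_gt0 is_nu_n is_nu_nm1 L oL.
have q2_gt0 : (0 < q2)%N := leq_trans q1_gt0 q12.
case: n n_gt0 is_nu_n is_nu_nm1 => [//|m] _ is_nu_n is_nu_m.
have oL' := orthogonal_set_of_succ is_nu_m is_nu_n oL.
split=> //.
have [[l0 Ll0]|noL] := pselect (exists l0, L l0).
  have [p [Lp pL]] := exists_orthogonal_point is_nu_m is_nu_n q1_gt0 q2_gt0 oL Ll0.
  exact: not_maximal_orthogonal oL' Lp pL.
by apply: (not_maximal_orthogonal (p := 0) oL') => [L0|l Ll]; case: noL; [exists 0 | exists l].
Qed.
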